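(* For $\lambda,\mu\in\mathbb{C}$ and pure-parity $f\in\mathcal{F}_\lambda$, $g\in\mathcal{F}_\mu$, define $$(f,g)=\mu\,\overline{D}(f)\,g-(-1)^{\sigma(f)}\,\lambda\,f\,\overline{D}(g)\in\mathcal{F}_{\lambda+\mu+\frac12},\qquad [f,g]=\mu\,f'\,g-\lambda\,f\,g'-(-1)^{\sigma(f)}\,\tfrac12\,\overline{D}(f)\,\overline{D}(g)\in\mathcal{F}_{\lambda+\mu+1}.$$ Then for every pure-parity $f\in\mathcal{F}_{-1}$ and all $\mu,\nu\in\mathbb{C}$ and pure-parity $g\in\mathcal{F}_\mu$, $h\in\mathcal{F}_\nu$, $$[f,(g,h)]=(-1)^{\sigma(f)}\,([f,g],h)+(-1)^{\sigma(f)(\sigma(g)+1)}\,(g,[f,h]).$$ That is, the odd operation $(\,,\,)$ on $\mathcal{F}=\bigoplus_\lambda\mathcal{F}_\lambda$ is invariant under the Lie superalgebra $\mathcal{K}(1)=(\mathcal{F}_{-1},[\,,\,])$.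
   Context: The supercircle $S^{1|1}$ has superalgebra of functions $C^\infty_{\mathbb{C}}(S^1)[\xi]$: elements $f=f_0(x)+\xi f_1(x)$ with $f_0,f_1$ smooth complex functions on $S^1$, $x$ the (affine) coordinate, $\xi$ odd with $\xi^2=0$, $x\xi=\xi x$. Parity: $\sigma(f_0)=0$, $\sigma(\xi f_1)=1$. Write $f'=\partial_x f=f_0'+\xi f_1'$, $\partial_\xi f=f_1$, and $\overline{D}=\partial_\xi-\xi\,\partial_x$. For $\lambda\in\mathbb{C}$, $\mathcal{F}_\lambda$ denotes a copy of $C^\infty_{\mathbb{C}}(S^{1|1})$ labelled by the weight $\lambda$; in each bracket the weights used in the formula are those of the spaces the arguments belong to (e.g. in $[f,g]$ with $f\in\mathcal{F}_{-1}$, $g\in\mathcal{F}_\mu$ one uses $\lambda=-1$; in $[f,(g,h)]$ the second argument has weight $\mu+\nu+\frac12$). *)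

From Stdlib Require Import Reals.
From Coquelicot Require Import Coquelicot.
Set Implicit Arguments.

Open Scope R_scope.

(* Smooth complex-valued functions on S^1 = R/Z, seen as 1-periodic functions
   R -> C whose real and imaginary parts are infinitely differentiable. *)
Definition smooth_S1 (u : R -> C) : Prop :=
  (forall x, u (x + 1) = u x) /\
  (forall n x, ex_derive_n (fun t => Re (u t)) n x) /\
  (forall n x, ex_derive_n (fun t => Im (u t)) n x).

Definition cderiv (u : R -> C) : R -> C :=
  fun x => (Derive (fun t => Re (u t)) x, Derive (fun t => Im (u t)) x).

(* An element f = f0(x) + xi f1(x) of C^oo_C(S^{1|1}) *)
Record sfun := SF { sf0 : R -> C ; sf1 : R -> C }.

Definition is_sfun (f : sfun) : Prop := smooth_S1 (sf0 f) /\ smooth_S1 (sf1 f).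

(* pure parity: sigma(f) = false (even) means f = f0, sigma(f) = true (odd)
   means f = xi f1 *)
Definition pure (p : bool) (f : sfun) : Prop :=
  if p then forall x, sf0 f x = 0%C else forall x, sf1 f x = 0%C.

Open Scope C_scope.

Definition sadd (f g : sfun) : sfun :=
  SF (fun x => sf0 f x + sf0 g x) (fun x => sf1 f x + sf1 g x).
Definition ssub (f g : sfun) : sfun :=
  SF (fun x => sf0 f x - sf0 g x) (fun x => sf1 f x - sf1 g x).
Definition sscal (a : C) (f : sfun) : sfun :=
  SF (fun x => a * sf0 f x) (fun x => a * sf1 f x).
(* (f0 + xi f1)(g0 + xi g1) = f0 g0 + xi (f1 g0 + f0 g1), since xi^2 = 0 *)
Definition smul (f g : sfun) : sfun :=
  SF (fun x => sf0 f x * sf0 g x)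
     (fun x => sf1 f x * sf0 g x + sf0 f x * sf1 g x).
Definition sdx (f : sfun) : sfun := SF (cderiv (sf0 f)) (cderiv (sf1 f)).
Definition sdxi (f : sfun) : sfun := SF (sf1 f) (fun _ => 0).
(* multiplication by xi : xi (f0 + xi f1) = xi f0 *)
Definition sxi (f : sfun) : sfun := SF (fun _ => 0) (sf0 f).
Definition Dbar (f : sfun) : sfun := ssub (sdxi f) (sxi (sdx f)).

Definition csign (n : nat) : C := RtoC ((-1) ^ n)%R.

Definition obr (pf : bool) (lam mu : C) (f g : sfun) : sfun :=
  ssub (sscal mu (smul (Dbar f) g))
       (sscal (csign (Nat.b2n pf) * lam) (smul f (Dbar g))).

Definition lbr (pf : bool) (lam mu : C) (f g : sfun) : sfun :=
  ssub (ssub (sscal mu (smul (sdx f) g)) (sscal lam (smul f (sdx g))))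
       (sscal (csign (Nat.b2n pf) * RtoC (/ 2)%R) (smul (Dbar f) (Dbar g))).

From Stdlib Require Import Reals FunctionalExtensionality.
From Coquelicot Require Import Coquelicot.

Set Implicit Arguments.

Open Scope C_scope.

(* Both brackets are built from products, d/dx and d/dxi with constant
   coefficients.  Pushing d/dx through products by the Leibniz rule, the
   identity becomes, pointwise, a polynomial identity in mu, nu and the
   components of f, g, h and their first two derivatives; for pure f, g, h
   half of these components vanish, and each of the eight parity cases is an
   identity in the field C. *)

Definition has_cderiv (u du : R -> C) : Prop :=
  forall x, is_derive (fun t => Re (u t)) x (Re (du x)) /\
            is_derive (fun t => Im (u t)) x (Im (du x)).

Lemma cderiv_has_cderiv u du : has_cderiv u du -> cderiv u = du.
Proof.
  intros H; apply functional_extensionality; intro x.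
  destruct (H x) as [Hre Him]; unfold cderiv.
  transitivity (Re (du x), Im (du x)).
  - f_equal; apply is_derive_unique; assumption.
  - destruct (du x); reflexivity.
Qed.

Lemma has_cderiv_ext u du dv :
  has_cderiv u du -> (forall x, du x = dv x) -> has_cderiv u dv.
Proof. intros H E x; rewrite <- E; apply H. Qed.

Lemma has_cderiv_const c : has_cderiv (fun _ => c) (fun _ => 0).
Proof. intro x; split; exact (is_derive_const (V := R_NormedModule) _ x). Qed.

Lemma has_cderiv_add u du v dv : has_cderiv u du -> has_cderiv v dv ->
  has_cderiv (fun t => u t + v t) (fun t => du t + dv t).
Proof.
  intros Hu Hv x; destruct (Hu x) as [Ur Ui], (Hv x) as [Vr Vi].
  split; now apply (is_derive_plus (V := R_NormedModule)).
Qed.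

Lemma has_cderiv_sub u du v dv : has_cderiv u du -> has_cderiv v dv ->
  has_cderiv (fun t => u t - v t) (fun t => du t - dv t).
Proof.
  intros Hu Hv x; destruct (Hu x) as [Ur Ui], (Hv x) as [Vr Vi].
  split; now apply (is_derive_minus (V := R_NormedModule)).
Qed.

Lemma is_derive_eq_value (f : R -> R) x l l' : is_derive f x l -> l = l' -> is_derive f x l'.
Proof. now intros H <-. Qed.

Lemma has_cderiv_mul u du v dv : has_cderiv u du -> has_cderiv v dv ->
  has_cderiv (fun t => u t * v t) (fun t => du t * v t + u t * dv t).
Proof.
  intros Hu Hv x; destruct (Hu x) as [Ur Ui], (Hv x) as [Vr Vi].
  pose proof (is_derive_mult _ _ x _ _ Ur Vr Rmult_comm) as RR.
  pose proof (is_derive_mult _ _ x _ _ Ui Vi Rmult_comm) as II.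
  pose proof (is_derive_mult _ _ x _ _ Ur Vi Rmult_comm) as RI.
  pose proof (is_derive_mult _ _ x _ _ Ui Vr Rmult_comm) as IR.
  split; eapply is_derive_eq_value.
  - exact (is_derive_minus _ _ x _ _ RR II).
  - destruct (du x), (v x), (u x), (dv x); cbn; ring.
  - exact (is_derive_plus _ _ x _ _ RI IR).
  - destruct (du x), (v x), (u x), (dv x); cbn; ring.
Qed.

Lemma has_cderiv_scal a u du :
  has_cderiv u du -> has_cderiv (fun t => a * u t) (fun t => a * du t).
Proof.
  intros Hu; eapply has_cderiv_ext; [exact (has_cderiv_mul (has_cderiv_const a) Hu)|].
  intro x; cbv beta; ring.
Qed.

Lemma smooth_S1_has_cderiv u :
  smooth_S1 u -> has_cderiv u (cderiv u) /\ has_cderiv (cderiv u) (cderiv (cderiv u)).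
Proof.
  intros [_ [Hre Him]]; split; intro x; split; apply Derive_correct.
  - exact (Hre 1%nat x).
  - exact (Him 1%nat x).
  - exact (Hre 2%nat x).
  - exact (Him 2%nat x).
Qed.

Definition has_sderiv (f df : sfun) : Prop :=
  has_cderiv (sf0 f) (sf0 df) /\ has_cderiv (sf1 f) (sf1 df).

Lemma sdx_has_sderiv f df : has_sderiv f df -> sdx f = df.
Proof.
  intros [H0 H1]; unfold sdx.
  rewrite (cderiv_has_cderiv H0), (cderiv_has_cderiv H1).
  now destruct df.
Qed.

Lemma is_sfun_has_sderiv f :
  is_sfun f -> has_sderiv f (sdx f) /\ has_sderiv (sdx f) (sdx (sdx f)).
Proof.
  intros [S0 S1].
  destruct (smooth_S1_has_cderiv S0), (smooth_S1_has_cderiv S1).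
  split; split; assumption.
Qed.

Lemma has_sderiv_ssub f df g dg :
  has_sderiv f df -> has_sderiv g dg -> has_sderiv (ssub f g) (ssub df dg).
Proof. intros [F0 F1] [G0 G1]; split; now apply has_cderiv_sub. Qed.

Lemma has_sderiv_sscal a f df :
  has_sderiv f df -> has_sderiv (sscal a f) (sscal a df).
Proof. intros [F0 F1]; split; now apply has_cderiv_scal. Qed.

Lemma has_sderiv_smul f df g dg : has_sderiv f df -> has_sderiv g dg ->
  has_sderiv (smul f g) (sadd (smul df g) (smul f dg)).
Proof.
  intros [F0 F1] [G0 G1]; split.
  - exact (has_cderiv_mul F0 G0).
  - eapply has_cderiv_ext.
    + exact (has_cderiv_add (has_cderiv_mul F1 G0) (has_cderiv_mul F0 G1)).
    + intro x; cbn [sf0 sf1 sadd smul]; ring.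
Qed.

Lemma has_sderiv_sdxi f df : has_sderiv f df -> has_sderiv (sdxi f) (sdxi df).
Proof. intros [_ F1]; split; cbn [sf0 sf1 sdxi]; [exact F1 | apply has_cderiv_const]. Qed.

Lemma has_sderiv_sxi f df : has_sderiv f df -> has_sderiv (sxi f) (sxi df).
Proof. intros [F0 _]; split; cbn [sf0 sf1 sxi]; [apply has_cderiv_const | exact F0]. Qed.

Ltac solve_has_sderiv :=
  repeat match goal with
  | |- has_sderiv (ssub _ _) _ => apply has_sderiv_ssub
  | |- has_sderiv (sscal _ _) _ => apply has_sderiv_sscal
  | |- has_sderiv (smul _ _) _ => apply has_sderiv_smul
  | |- has_sderiv (sdxi _) _ => apply has_sderiv_sdxi
  | |- has_sderiv (sxi _) _ => apply has_sderiv_sxi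
  | |- has_sderiv _ _ => eassumption
  end.

Lemma pure_sdx {p f} : pure p f -> pure p (sdx f).
Proof.
  assert (cderiv_zero : forall u : R -> C, (forall x, u x = 0%C) -> forall x, cderiv u x = 0%C).
  { intros u Hu x.
    assert (E : u = fun _ => 0%C) by (apply functional_extensionality; exact Hu).
    subst u.
    now rewrite (cderiv_has_cderiv (has_cderiv_const 0%C)). }
  destruct p; intros H x; now apply cderiv_zero.
Qed.

Lemma csign_0 : csign 0 = 1%C.
Proof. reflexivity. Qed.

Lemma csign_S n : csign (S n) = - csign n.
Proof. unfold csign; rewrite <- RtoC_opp; f_equal; simpl; ring. Qed.

Lemma RtoC_m1 : RtoC (-1) = - (1).
Proof. rewrite <- RtoC_opp; f_equal; ring. Qed.

Lemma RtoC_half : RtoC (/ 2) = / (1 + 1).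
Proof. rewrite RtoC_inv by discrR; f_equal; now rewrite <- RtoC_plus. Qed.

Theorem proposition2p2 (mu nu : C) (pf pg ph : bool) (f g h : sfun) :
  is_sfun f -> is_sfun g -> is_sfun h ->
  pure pf f -> pure pg g -> pure ph h ->
  lbr pf (RtoC (-1)%R) (mu + nu + RtoC (/ 2)%R) f (obr pg mu nu g h)
  = sadd
      (sscal (csign (Nat.b2n pf)) (obr (xorb pf pg) mu nu (lbr pf (RtoC (-1)%R) mu f g) h))
      (sscal (csign (Nat.b2n pf * (Nat.b2n pg + 1))) (obr pg mu nu g (lbr pf (RtoC (-1)%R) nu f h))).
Proof.
  intros Sf Sg Sh Pf Pg Ph.
  destruct (is_sfun_has_sderiv Sf) as [Df Df'], (is_sfun_has_sderiv Sg) as [Dg Dg'],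
    (is_sfun_has_sderiv Sh) as [Dh Dh'].
  pose proof (pure_sdx Pf) as Pf'; pose proof (pure_sdx Pf') as Pf''.
  pose proof (pure_sdx Pg) as Pg'; pose proof (pure_sdx Pg') as Pg''.
  pose proof (pure_sdx Ph) as Ph'; pose proof (pure_sdx Ph') as Ph''.
  unfold lbr, obr, Dbar.
  set (f'' := sdx (sdx f)) in *; set (f' := sdx f) in *.
  set (g'' := sdx (sdx g)) in *; set (g' := sdx g) in *.
  set (h'' := sdx (sdx h)) in *; set (h' := sdx h) in *.
  clearbody f' f'' g' g'' h' h''.
  repeat match goal with
  | |- context [sdx ?t] => erewrite (sdx_has_sderiv (f := t)) by solve_has_sderiv
  end.
  destruct pf, pg, ph; cbn in Pf, Pf', Pf'', Pg, Pg', Pg'', Ph, Ph', Ph'';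
    cbv [sadd ssub sscal smul sdxi sxi sf0 sf1]; f_equal; apply functional_extensionality;
    intro x; rewrite ?Pf, ?Pf', ?Pf'', ?Pg, ?Pg', ?Pg'', ?Ph, ?Ph', ?Ph'';
    cbn [Nat.b2n xorb Nat.mul Nat.add]; rewrite ?csign_S, csign_0, RtoC_m1, RtoC_half;
    field.
Qed.
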